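(* Suppose that there exist absolute constants $c_1'>1$, $c_2'>0$, $c_3'>0$ and $c_4'>0$ such that \begin{align*} \frac{1}{c_1'}\, d_n^2(\lambda_0,\lambda_1)\le \frac{1}{n}\mathrm{KL}\big(\mathsf{P}^{(n)}_{\lambda_0}, \mathsf{P}^{(n)}_{\lambda_1}\big)\le c_1'\, d_n^2(\lambda_0,\lambda_1) \end{align*} and \begin{align*} \mathsf{P}_{\lambda_0}^{(n)}\exp\Big\{t\Big(\log\frac{q_n(\lambda_0,Y^{(n)})}{q_n(\lambda_1,Y^{(n)})} - \mathrm{KL}\big(\mathsf{P}^{(n)}_{\lambda_0}, \mathsf{P}^{(n)}_{\lambda_1}\big)\Big)\Big\}\le c_2'\exp\big(c_3't^2n\, d_n^2(\lambda_0,\lambda_1)\big) \end{align*} for any $t\in[-c_4',c_4']$, any $\lambda_0,\lambda_1\in\Lambda_n$ and any sufficiently large $n\in\mathbb{N}$. Then there exist absolute constants $\rho_\circ\in(0,1)$, $\rho_{+}>1$, $a_2\ge a_1\in\mathbb{R}$ and $c_2\ge c_1>0$ such that \begin{align*} a_1+c_1 n d_n^2(\lambda_0,\lambda_1)\le \mathsf{D}_{\rho_\circ}\big(\mathsf{P}^{(n)}_{\lambda_0},\mathsf{P}^{(n)}_{\lambda_1}\big),\qquad \mathsf{D}_{\rho_{+}}\big(\mathsf{P}^{(n)}_{\lambda_0},\mathsf{P}^{(n)}_{\lambda_1}\big)\le a_2+c_2 n d_n^2(\lambda_0,\lambda_1) \end{align*} for any $\lambda_0,\lambda_1\in\Lambda_n$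 and any sufficiently large $n$.
   Context: For each $n\in\mathbb{N}$ a sample $Y^{(n)}$ takes values in a measurable space $\mathfrak{Y}_n$ with a $\sigma$-finite reference measure $\mu_n$. The natural parameter space $\Lambda_n$ is equipped with a metric $d_n$, and $q_n:\Lambda_n\times\mathfrak{Y}_n\to(0,\infty)$ is a likelihood with $\int q_n(\lambda,y)\,\mu_n(dy)=1$; $\mathsf{P}^{(n)}_\lambda(dy)=q_n(\lambda,y)\mu_n(dy)$ and $\mathsf{P}^{(n)}_\lambda g$ denotes expectation of $g$ under $\mathsf{P}^{(n)}_\lambda$. $\mathrm{KL}(\mathsf{P}_1,\mathsf{P}_2)=\int\log(d\mathsf{P}_1/d\mathsf{P}_2)\,d\mathsf{P}_1$, and for $\rho\in(0,1)\cup(1,\infty)$ the Rényi divergence is $\mathsf{D}_\rho(\mathsf{P}_1,\mathsf{P}_2)=\frac{1}{\rho-1}\log\int (d\mathsf{P}_1/d\mathsf{P}_2)^{\rho-1}d\mathsf{P}_1$ (both $+\infty$ if $\mathsf{P}_1\not\ll\mathsf{P}_2$). *)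

From HB Require Import structures.
From mathcomp Require Import all_boot all_order all_algebra.
From mathcomp Require Import all_classical all_reals all_analysis.
Set Implicit Arguments. Unset Strict Implicit. Unset Printing Implicit Defensive.
Import Order.TTheory GRing.Theory Num.Theory.
Local Open Scope classical_set_scope.
Local Open Scope ring_scope.

Definition is_metric (R : realType) (L : Type) (d : L -> L -> R) : Prop :=
  (forall x y, 0 <= d x y) /\ (forall x y, d x y = 0 <-> x = y) /\
  (forall x y, d x y = d y x) /\ (forall x y z, d x z <= d x y + d y z).

(* KL(P_{l0}, P_{l1}) = \int log(dP0/dP1) dP0 = \int q0 log(q0/q1) dmu
   (densities are strictly positive so P0 << P1) *)
Definition KLq (dT : measure_display) (T : measurableType dT) (R : realType)
  (mu : {measure set T -> \bar R}) (q0 q1 : T -> R) : \bar R :=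
  (\int[mu]_y (ln (q0 y / q1 y) * q0 y)%:E)%E.

Definition Eq (dT : measure_display) (T : measurableType dT) (R : realType)
  (mu : {measure set T -> \bar R}) (q0 : T -> R) (g : T -> R) : \bar R :=
  (\int[mu]_y (g y * q0 y)%:E)%E.

(* Renyi divergence D_rho(P0,P1) = 1/(rho-1) log \int (dP0/dP1)^(rho-1) dP0,
   with log(+oo) = +oo. *)
Definition Renyiq (dT : measure_display) (T : measurableType dT) (R : realType)
  (mu : {measure set T -> \bar R}) (rho : R) (q0 q1 : T -> R) : \bar R :=
  match Eq mu q0 (fun y => (q0 y / q1 y) `^ (rho - 1)) with
  | r%:E => (ln r / (rho - 1))%:E
  | +oo%E => if 1 < rho then +oo%E else -oo%E
  | -oo%E => -oo%E
  end.

(** The Rényi divergence of order [1 + s] is [KL + (1/s) log M(s)], where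
    [M(s) = E_(P0) exp (s (log (q0/q1) - KL))] is the moment generating
    function of the centred log-likelihood ratio.  For [s = t] and [s = -t]
    with a fixed small [t > 0], the sub-Gaussian bound
    [M(s) <= c2' exp (c3' t^2 n d^2)] gives
    [|D_(1 +- t) - KL| <= |log c2'| / t + c3' t n d^2], and choosing
    [c3' t <= 1 / (2 c1')] makes the last term at most [KL / 2], so both
    divergences stay comparable to [KL], hence to [n d^2]. *)

From mathcomp Require Import all_boot all_order all_algebra.
From mathcomp Require Import all_classical all_reals all_analysis.
From mathcomp Require Import measurable_realfun.
From mathcomp Require Import ring lra.
Set Implicit Arguments. Unset Strict Implicit. Unset Printing Implicit Defensive.
Import Order.TTheory GRing.Theory Num.Theory.
Local Open Scope classical_set_scope.
Local Open Scope ring_scope.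

Lemma fin_of_scale_sandwich (R : realType) (x : \bar R) (a b c : R) : 0 < c ->
  (a%:E <= c%:E * x <= b%:E)%E -> exists2 k, x = k%:E & a / c <= k <= b / c.
Proof.
move=> c_gt0; case: x => [k | |] /andP[lo hi].
- exists k => //; rewrite -EFinM !lee_fin in lo hi.
  by rewrite ler_pdivlMr // ler_pdivrMr // ![_ * c]mulrC lo hi.
- by move: hi; rewrite muleC gt0_mulye ?lte_fin.
- by move: lo; rewrite muleC gt0_mulNye ?lte_fin.
Qed.

Lemma integral_gt0 (dT : measure_display) (T : measurableType dT) (R : realType)
  (mu : {measure set T -> \bar R}) (f : T -> R) :
  mu setT != 0%E -> (forall y, 0 < f y) -> measurable_fun setT f ->
  (0 < \int[mu]_y (f y)%:E)%E.
Proof.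
move=> /eqP muT_neq0 f_gt0 mf.
have mfE : measurable_fun setT (fun y => (f y)%:E) by exact/measurable_EFinP.
have absE : (fun y => `|(f y)%:E|%E) = (fun y => (f y)%:E).
  by apply/funext => y; rewrite gee0_abs // lee_fin ltW.
rewrite lt_def integral_ge0 ?andbT; last by move=> y _; rewrite lee_fin ltW.
apply/eqP => int0.
have [N [mN muN0 fN]] : ae_eq mu setT (fun y => (f y)%:E) (cst 0%E).
  by apply/(ae_eq_integral_abs mu measurableT mfE); rewrite absE.
apply: muT_neq0; apply: (subset_measure0 _ _ _ muN0) => // y _.
by apply: fN => /(_ I) [] /eqP; rewrite gt_eqF.
Qed.

Lemma exists_pos_lt1_le2 (R : realFieldType) (a b : R) : 0 < a -> 0 < b ->
  exists t, [/\ 0 < t, t < 1, t <= a & t <= b].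
Proof.
move=> a_gt0 b_gt0; exists (Num.min (Num.min a b) 2^-1).
split.
- by rewrite !lt_min a_gt0 b_gt0 invr_gt0 ltr0n.
- by rewrite gt_min invf_lt1 ?ltr1n ?orbT.
- by rewrite !ge_min lexx.
- by rewrite !ge_min lexx orbT.
Qed.

Section llr_mgf.
Context (dT : measure_display) (T : measurableType dT) (R : realType).
Variables (mu : {measure set T -> \bar R}) (q0 q1 : T -> R).
Hypotheses (q0_gt0 : forall y, 0 < q0 y) (q1_gt0 : forall y, 0 < q1 y).
Hypotheses (mq0 : measurable_fun setT q0) (mq1 : measurable_fun setT q1).
Hypothesis q0_int1 : (\int[mu]_y (q0 y)%:E = 1)%E.

Definition llr_mgf (k s : R) : \bar R :=
  Eq mu q0 (fun y => expR (s * (ln (q0 y / q1 y) - k))).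

Let lnq0q1 y : ln (q0 y / q1 y) = ln (q0 y) - ln (q1 y).
Proof. by rewrite lnM ?posrE ?invr_gt0 // lnV ?posrE. Qed.

Let measurable_llr_mgf_integrand k s :
  measurable_fun setT (fun y => expR (s * (ln (q0 y / q1 y) - k)) * q0 y).
Proof.
under eq_fun do rewrite lnq0q1.
apply: measurable_funM => //; apply: (measurableT_comp (@measurable_expR R)).
apply: measurable_funM; first exact: measurable_cst.
apply: measurable_funB; last exact: measurable_cst.
by apply: measurable_funB; apply: (measurableT_comp (@measurable_ln R)).
Qed.

Lemma mu_setT_neq0 : mu setT != 0%E.
Proof.
apply/eqP => muT0; move: q0_int1.
rewrite null_set_integral //; last exact/measurable_EFinP.
by move=> /eqP; rewrite eq_sym eqe oner_eq0.
Qed.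

Lemma llr_mgf_gt0 k s : (0 < llr_mgf k s)%E.
Proof.
apply: integral_gt0 => //; first exact: mu_setT_neq0.
by move=> y; rewrite mulr_gt0 ?expR_gt0.
Qed.

Lemma Eq_powR_llr s k :
  Eq mu q0 (fun y => (q0 y / q1 y) `^ s) = ((expR (s * k))%:E * llr_mgf k s)%E.
Proof.
rewrite /llr_mgf /Eq -ge0_integralZl_EFin ?expR_ge0 //; last 2 first.
- by move=> y _; rewrite lee_fin mulr_ge0 ?expR_ge0 // ltW.
- exact/measurable_EFinP.
apply: eq_integral => y _; rewrite /powR gt_eqF ?divr_gt0 //.
by rewrite -EFinM mulrA -expRD; congr (expR _ * _)%:E; ring.
Qed.

Lemma Renyiq_llr_mgf s k m : s != 0 -> llr_mgf k s = m%:E ->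
  Renyiq mu (1 + s) q0 q1 = (k + ln m / s)%:E.
Proof.
move=> s_neq0 mgfE; have := llr_mgf_gt0 k s; rewrite mgfE lte_fin => m_gt0.
rewrite /Renyiq (_ : 1 + s - 1 = s); last by rewrite addrAC subrr add0r.
rewrite (Eq_powR_llr s k) mgfE -EFinM.
by rewrite lnM ?posrE ?expR_gt0 // expRK; congr _%:E; field.
Qed.

Let llr_mgf_le_subgaussian k s t c b : 0 < t -> 0 < c ->
  (llr_mgf k s <= (c * expR (b * t ^+ 2))%:E)%E ->
  exists2 m, llr_mgf k s = m%:E & ln m / t <= ln c / t + b * t.
Proof.
move=> t_gt0 c_gt0; have := llr_mgf_gt0 k s.
case: (llr_mgf k s) => [m | |] // m_gt0 m_le.
rewrite lte_fin in m_gt0; rewrite lee_fin in m_le; exists m => //.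
have -> : ln c / t + b * t = ln (c * expR (b * t ^+ 2)) / t.
  by rewrite lnM ?posrE ?expR_gt0 // expRK; field; rewrite gt_eqF.
by rewrite ler_pM2r ?invr_gt0 // ler_ln ?posrE // (lt_le_trans m_gt0).
Qed.

Lemma Renyiq_le_subgaussian t k c b : 0 < t -> 0 < c ->
  (llr_mgf k t <= (c * expR (b * t ^+ 2))%:E)%E ->
  (Renyiq mu (1 + t) q0 q1 <= (k + ln c / t + b * t)%:E)%E.
Proof.
move=> t_gt0 c_gt0 /(llr_mgf_le_subgaussian t_gt0 c_gt0) [m mgfE lnm_le].
by rewrite (Renyiq_llr_mgf (lt0r_neq0 t_gt0) mgfE) lee_fin; lra.
Qed.

Lemma Renyiq_ge_subgaussian t k c b : 0 < t -> 0 < c ->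
  (llr_mgf k (- t) <= (c * expR (b * t ^+ 2))%:E)%E ->
  ((k - ln c / t - b * t)%:E <= Renyiq mu (1 - t) q0 q1)%E.
Proof.
move=> t_gt0 c_gt0 /(llr_mgf_le_subgaussian t_gt0 c_gt0) [m mgfE lnm_le].
have Nt_neq0 : - t != 0 by rewrite oppr_eq0 lt0r_neq0.
by rewrite (Renyiq_llr_mgf Nt_neq0 mgfE) invrN mulrN lee_fin; lra.
Qed.

Lemma Renyiq_KL_subgaussian c1 c2 c3 t k D :
  0 < c1 -> 0 < c2 -> 0 < t -> 0 <= D -> c3 * t <= (2 * c1)^-1 ->
  c1^-1 * D <= k <= c1 * D ->
  (llr_mgf k t <= (c2 * expR (c3 * t ^+ 2 * D))%:E)%E ->
  (llr_mgf k (- t) <= (c2 * expR (c3 * (- t) ^+ 2 * D))%:E)%E ->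
  ((- (`|ln c2| / t) + (2 * c1)^-1 * D)%:E <= Renyiq mu (1 - t) q0 q1)%E /\
  (Renyiq mu (1 + t) q0 q1 <= (`|ln c2| / t + (c1 + c3 * t) * D)%:E)%E.
Proof.
move=> c1_gt0 c2_gt0 t_gt0 D_ge0 c3t_le /andP[k_ge k_le] mgf_pos mgf_neg.
have tD_swap s : c3 * s ^+ 2 * D = (c3 * D) * s ^+ 2 by rewrite mulrAC.
rewrite tD_swap in mgf_pos; rewrite sqrrN tD_swap in mgf_neg.
have lnc2_le : ln c2 / t <= `|ln c2| / t by rewrite ler_pM2r ?invr_gt0 ?ler_norm.
have c3tD_le : c3 * t * D <= (2 * c1)^-1 * D by rewrite ler_wpM2r.
have inv_c1E : c1^-1 = 2 * (2 * c1)^-1 by rewrite invfM mulrA divff ?mul1r.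
split.
- apply: le_trans (Renyiq_ge_subgaussian t_gt0 c2_gt0 mgf_neg).
  by rewrite lee_fin; move: k_ge; rewrite inv_c1E; lra.
- apply: le_trans (Renyiq_le_subgaussian t_gt0 c2_gt0 mgf_pos) _.
  by rewrite lee_fin; lra.
Qed.

End llr_mgf.

Theorem lemma3p1 (R : realType)
  (dY : nat -> measure_display) (Y : forall n, measurableType (dY n))
  (mu : forall n, {measure set Y n -> \bar R})
  (Lam : nat -> Type) (dn : forall n, Lam n -> Lam n -> R)
  (q : forall n, Lam n -> Y n -> R) :
  (forall n, sigma_finite setT (mu n)) ->
  (forall n, is_metric (dn n)) ->
  (forall n l y, 0 < q n l y) ->
  (forall n l, measurable_fun setT (q n l)) ->
  (forall n l, (\int[mu n]_y (q n l y)%:E = 1)%E) ->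
  (exists c1' c2' c3' c4' : R,
     [/\ 1 < c1', 0 < c2', 0 < c3' & 0 < c4'] /\
     exists N : nat, forall n, (N <= n)%N -> forall l0 l1 : Lam n,
       ((c1'^-1 * dn n l0 l1 ^+ 2)%:E
          <= (n%:R^-1)%:E * KLq (mu n) (q n l0) (q n l1)
        /\ (n%:R^-1)%:E * KLq (mu n) (q n l0) (q n l1)
          <= (c1' * dn n l0 l1 ^+ 2)%:E)%E /\
       forall t : R, -c4' <= t <= c4' ->
         (Eq (mu n) (q n l0)
            (fun y => expR (t * (ln (q n l0 y / q n l1 y)
                                 - fine (KLq (mu n) (q n l0) (q n l1)))))
          <= (c2' * expR (c3' * t ^+ 2 * n%:R * dn n l0 l1 ^+ 2))%:E)%E) ->
  exists (rho0 rhop a1 a2 c1 c2 : R),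
    [/\ 0 < rho0 < 1, 1 < rhop, a1 <= a2, 0 < c1 & c1 <= c2] /\
    exists N : nat, forall n, (N <= n)%N -> forall l0 l1 : Lam n,
      ((a1 + c1 * n%:R * dn n l0 l1 ^+ 2)%:E
         <= Renyiq (mu n) rho0 (q n l0) (q n l1)
       /\ Renyiq (mu n) rhop (q n l0) (q n l1)
         <= (a2 + c2 * n%:R * dn n l0 l1 ^+ 2)%:E)%E.
Proof.
move=> _ _ q_gt0 mq q_int1 [c1' [c2' [c3' [c4' []]]]].
move=> [c1'_gt1 c2'_gt0 c3'_gt0 c4'_gt0] [N hyp].
have c1'_gt0 : 0 < c1' by apply: lt_trans c1'_gt1.
have inv2c1'_gt0 : 0 < (2 * c1')^-1 by rewrite invr_gt0 mulr_gt0.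
have [t [t_gt0 t_lt1 t_le_c4' t_le]] :=
  exists_pos_lt1_le2 c4'_gt0 (divr_gt0 inv2c1'_gt0 c3'_gt0).
have c3't_le : c3' * t <= (2 * c1')^-1 by rewrite mulrC -ler_pdivlMr.
exists (1 - t), (1 + t), (- (`|ln c2'| / t)), (`|ln c2'| / t).
exists (2 * c1')^-1, (c1' + c3' * t); split.
  have : (2 * c1')^-1 <= 1 by rewrite invf_le1 ?mulr_gt0 //; lra.
  have : 0 <= c3' * t by rewrite mulr_ge0 ?ltW.
  have : 0 <= `|ln c2'| / t by rewrite divr_ge0 ?normr_ge0 ?ltW.
  by move=> *; split; [apply/andP; split | ..]; lra.
exists (maxn N 1) => n; rewrite geq_max => /andP[nN n_gt0] l0 l1.
have [KL_bounds mgf_bound] := hyp n nN l0 l1.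
have inv_n_gt0 : 0 < n%:R^-1 :> R by rewrite invr_gt0 ltr0n.
have [k KLk k_bounds] :=
  fin_of_scale_sandwich inv_n_gt0 (introT andP KL_bounds).
rewrite KLk /= in mgf_bound.
rewrite -!mulrA; apply: (Renyiq_KL_subgaussian (q_gt0 n l0) (q_gt0 n l1)
  (mq n l0) (mq n l1) (q_int1 n l0) (k := k)) => //.
- by rewrite mulr_ge0 ?sqr_ge0.
- by move: k_bounds; rewrite invrK => /andP[? ?]; apply/andP; split; lra.
- by rewrite /llr_mgf mulrA; apply: mgf_bound; apply/andP; split; lra.
- by rewrite /llr_mgf mulrA; apply: mgf_bound; apply/andP; split; lra.
Qed.
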